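(* Let $\Omega=\{a,b,c,d\}$ and $\Sigma=2^\Omega$. Let $\mu_1,\mu_2,\mu_3,\mu_4$ be the probability measures on $\Sigma$ determined by $\mu_1(a)=\mu_1(b)=\mu_1(c)=\mu_1(d)=\tfrac14$; $\mu_2(a)=0,\ \mu_2(b)=\tfrac18,\ \mu_2(c)=\tfrac38,\ \mu_2(d)=\tfrac12$; $\mu_3(a)=\tfrac18,\ \mu_3(b)=\tfrac38,\ \mu_3(c)=0,\ \mu_3(d)=\tfrac12$; $\mu_4(a)=\tfrac38,\ \mu_4(b)=0,\ \mu_4(c)=\tfrac18,\ \mu_4(d)=\tfrac12$. Let $\mathcal{P}=\{\mu_1,\mu_2,\mu_3,\mu_4\}$ and $\mathcal{P}^*(X)=\max_{i}\mu_i(X)$. For $\epsilon>0$ define $\upsilon_\epsilon:\Sigma\to[0,1]$ by $\upsilon_\epsilon(\{a,b,c\})=\mathcal{P}^*(\{a,b,c\})+\epsilon$ and $\upsilon_\epsilon(X)=\mathcal{P}^*(X)$ for $X\ne\{a,b,c\}$. Then for every $0<\epsilon<\tfrac18$: (i) $\upsilon_\epsilon$ satisfies property (6), i.e. for all disjoint $A,B\subseteq\Omega$, $\upsilon_\epsilon(A)+(1-\upsilon_\epsilon(\Omega\setminus B))\le \upsilon_\epsilon(A\cup B)\le \upsilon_\epsilon(A)+\upsilon_\epsilon(B)$; and (ii) there is no set $\mathcal{P}'$ of probability measures on $\Sigma$ such that $\upsilon_\epsilon(X)=\sup\{\mu(X):\mu\in\mathcal{P}'\}$ for all $X\in\Si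gma$.
   Context: Probability measures are finitely additive functions $\mu:\Sigma\to[0,1]$ with $\mu(\emptyset)=0$, $\mu(\Omega)=1$. *)

From HB Require Import structures.
From mathcomp Require Import all_boot all_order all_algebra.
From mathcomp Require Import reals.
Set Implicit Arguments. Unset Strict Implicit. Unset Printing Implicit Defensive.
Import Order.TTheory GRing.Theory Num.Theory.
Local Open Scope ring_scope.

Definition Omega := 'I_4.
Definition oa : Omega := @Ordinal 4 0 isT.
Definition ob : Omega := @Ordinal 4 1 isT.
Definition oc : Omega := @Ordinal 4 2 isT.
Definition od : Omega := @Ordinal 4 3 isT.

Definition is_prob_measure (R : realType) (mu : {set Omega} -> R) : Prop :=
  (forall X, 0 <= mu X <= 1) /\ mu set0 = 0 /\ mu setT = 1 /\
  (forall A B : {set Omega}, [disjoint A & B] -> mu (A :|: B) = mu A + mu B).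

Definition pmeas (R : realType) (wa wb wc wd : R) (X : {set Omega}) : R :=
  (if oa \in X then wa else 0) + (if ob \in X then wb else 0) +
  (if oc \in X then wc else 0) + (if od \in X then wd else 0).

Definition mu1 (R : realType) := pmeas (1/4 : R) (1/4) (1/4) (1/4).
Definition mu2 (R : realType) := pmeas (0 : R) (1/8) (3/8) (1/2).
Definition mu3 (R : realType) := pmeas (1/8 : R) (3/8) 0 (1/2).
Definition mu4 (R : realType) := pmeas (3/8 : R) 0 (1/8) (1/2).

Definition Pstar (R : realType) (X : {set Omega}) : R :=
  Num.max (Num.max (mu1 R X) (mu2 R X)) (Num.max (mu3 R X) (mu4 R X)).

Definition abc : {set Omega} := [set oa; ob; oc].

Definition upsilon (R : realType) (eps : R) (X : {set Omega}) : R :=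
  if X == abc then Pstar R X + eps else Pstar R X.

Definition property6 (R : realType) (u : {set Omega} -> R) : Prop :=
  forall A B : {set Omega}, [disjoint A & B] ->
    u A + (1 - u (~: B)) <= u (A :|: B) /\ u (A :|: B) <= u A + u B.

Definition is_sup (R : realType) (S : R -> Prop) (s : R) : Prop :=
  (forall y, S y -> y <= s) /\ (forall z, (forall y, S y -> y <= z) -> s <= z).

Definition upper_env_of (R : realType) (P' : ({set Omega} -> R) -> Prop)
    (u : {set Omega} -> R) : Prop :=
  forall X, is_sup (fun y => exists2 mu, P' mu & y = mu X) (u X).

From HB Require Import structures.
From mathcomp Require Import all_boot all_order all_algebra.
From mathcomp Require Import reals ring lra.
Import Order.TTheory GRing.Theory Num.Theory.
Set Implicit Arguments. Unset Strict Implicit. Unset Printing Implicit Defensive.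
Local Open Scope ring_scope.

(* Every value of upsilon_eps has the form n/8 + k eps with n <= 8 and k the
   indicator of {a,b,c}.  As 0 <= eps <= 1/8, each inequality of (6) then
   follows from a comparison of the integer pairs (n, k) alone, which is a
   finite check over the membership patterns of A and B.  Conversely, a
   probability measure mu dominated by upsilon_eps satisfies
   2 mu{a,b,c} = mu{a,b} + mu{a,c} + mu{b,c} <= 3/2, so any upper envelope of
   such measures is at most 3/4 at {a,b,c}, while upsilon_eps{a,b,c} = 3/4 + eps. *)

Definition eighths_eps (R : numFieldType) (eps : R) (n k : nat) : R :=
  n%:R / 8 + k%:R * eps.

Lemma eighths_epsD (R : numFieldType) (eps : R) n k n' k' :
  eighths_eps eps n k + eighths_eps eps n' k' = eighths_eps eps (n + n') (k + k').
Proof. rewrite /eighths_eps !natrD; ring. Qed.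

Lemma eighths_eps8 (R : numFieldType) (eps : R) : eighths_eps eps 8 0 = 1.
Proof. by rewrite /eighths_eps mul0r addr0 divff // pnatr_eq0. Qed.

Lemma Omega_cases (x : Omega) : [\/ x = oa, x = ob, x = oc | x = od].
Proof.
case: x => [[|[|[|[|n]]]] lt_x4] //;
  [constructor 1 | constructor 2 | constructor 3 | constructor 4]; exact: val_inj.
Qed.

Lemma eq_abcE (X : {set Omega}) :
  (X == abc) = [&& oa \in X, ob \in X, oc \in X & od \notin X].
Proof.
apply/eqP/and4P => [-> | [Xa Xb Xc /negPf Xd]]; first by rewrite !inE.
by apply/setP => x; rewrite !inE; case: (Omega_cases x) => ->.
Qed.

Lemma additive_set3_pairs (T : finType) (R : zmodType) (mu : {set T} -> R) (x y z : T) :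
  (forall A B : {set T}, [disjoint A & B] -> mu (A :|: B) = mu A + mu B) ->
  x != y -> x != z -> y != z ->
  mu [set x; y; z] *+ 2 = mu [set x; y] + mu [set x; z] + mu [set y; z].
Proof.
move=> mu_add xy xz yz.
have dxy : [disjoint [set x] & [set y]] by rewrite disjoints1 inE.
have dxz : [disjoint [set x] & [set z]] by rewrite disjoints1 inE.
have dyz : [disjoint [set y] & [set z]] by rewrite disjoints1 inE.
have dxyz : [disjoint [set x; y] & [set z]].
  by rewrite disjoint_sym disjoints1 !inE negb_or !(eq_sym z) xz yz.
rewrite mu_add // !mu_add //.
move: (mu [set x]) (mu [set y]) (mu [set z]) => a b c.
by rewrite mulr2n -[a + b + c]addrA addrACA [a + b + _]addrACA !addrA.
Qed.

(* A surplus of one eps on the left is absorbed by a spare eighth. *)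
Definition eighths_eps_leb (n k n' k' : nat) : bool :=
  [|| (n < n') && (k <= k'.+1) | (n <= n') && (k <= k')]%N.

Lemma ler_eighths_eps (R : realFieldType) (eps : R) n k n' k' :
  0 <= eps -> eps <= 1/8 -> eighths_eps_leb n k n' k' ->
  eighths_eps eps n k <= eighths_eps eps n' k'.
Proof.
rewrite /eighths_eps => eps_ge0 eps_le /orP[/andP[lt_nn' le_kk'] | /andP[le_nn' le_kk']].
- have : n.+1%:R <= n'%:R :> R by rewrite ler_nat.
  have : k%:R * eps <= k'.+1%:R * eps by rewrite ler_wpM2r // ler_nat.
  rewrite -[n.+1%:R]natr1 -[k'.+1%:R]natr1 mulrDl mul1r; lra.
- have : n%:R <= n'%:R :> R by rewrite ler_nat.
  have : k%:R * eps <= k'%:R * eps by rewrite ler_wpM2r // ler_nat.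
  lra.
Qed.

(* 8 P^*(X), listed by the binary code of X with a as the lowest bit. *)
Definition pstar_eighths (X : {set Omega}) : nat :=
  nth 0 [:: 0; 3; 3; 4; 3; 4; 4; 6; 4; 7; 7; 8; 7; 8; 8; 8]%N
    ((oa \in X) + 2 * (ob \in X) + 4 * (oc \in X) + 8 * (od \in X)).

Definition abc_indicator (X : {set Omega}) : nat := X == abc.

Lemma upsilonE (R : realType) (eps : R) (X : {set Omega}) :
  upsilon eps X = eighths_eps eps (pstar_eighths X) (abc_indicator X).
Proof.
rewrite /upsilon /abc_indicator eq_abcE /Pstar /mu1 /mu2 /mu3 /mu4 /pmeas.
rewrite /eighths_eps /pstar_eighths.
by case: (oa \in X); case: (ob \in X); case: (oc \in X); case: (od \in X);
  rewrite /= /Order.max; repeat case: ifP; move=> *; lra.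
Qed.

Lemma eighths_property6 (A B : {set Omega}) : [disjoint A & B] ->
  eighths_eps_leb (pstar_eighths A + 8) (abc_indicator A)
    (pstar_eighths (A :|: B) + pstar_eighths (~: B))
    (abc_indicator (A :|: B) + abc_indicator (~: B)) &&
  eighths_eps_leb (pstar_eighths (A :|: B)) (abc_indicator (A :|: B))
    (pstar_eighths A + pstar_eighths B) (abc_indicator A + abc_indicator B).
Proof.
move=> dAB; have dAx x : ~~ ((x \in A) && (x \in B)).
  by apply/andP => -[/(disjointFr dAB) ->].
rewrite /pstar_eighths /abc_indicator !eq_abcE !inE.
move: (dAx oa) (dAx ob) (dAx oc) (dAx od).
move: (oa \in A) (ob \in A) (oc \in A) (od \in A).
move: (oa \in B) (ob \in B) (oc \in B) (od \in B).
by do 8!case.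
Qed.

Lemma upsilon_property6 (R : realType) (eps : R) :
  0 <= eps -> eps <= 1/8 -> property6 (upsilon eps).
Proof.
move=> eps_ge0 eps_le A B /eighths_property6/andP[lb ub]; rewrite !upsilonE.
split; last by rewrite !eighths_epsD; exact: ler_eighths_eps.
rewrite addrA lerBlDr -(eighths_eps8 eps) !eighths_epsD addn0.
exact: ler_eighths_eps.
Qed.

Lemma dominated_abc_le (R : realType) (eps : R) (mu : {set Omega} -> R) :
  is_prob_measure mu -> (forall X, mu X <= upsilon eps X) -> mu abc <= 3/4.
Proof.
case=> _ [_ [_ mu_add]] mu_le.
have := additive_set3_pairs mu_add (isT : oa != ob) (isT : oa != oc) (isT : ob != oc).
have := mu_le [set oa; ob]; have := mu_le [set oa; oc]; have := mu_le [set ob; oc].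
rewrite !upsilonE /eighths_eps /pstar_eighths /abc_indicator !eq_abcE !inE /= mulr2n.
lra.
Qed.

Theorem proposition2 (R : realType) (eps : R) :
  0 < eps -> eps < 1/8 ->
  property6 (upsilon eps) /\
  ~ (exists P' : ({set Omega} -> R) -> Prop,
        (forall mu, P' mu -> is_prob_measure mu) /\ upper_env_of P' (upsilon eps)).
Proof.
move=> eps_gt0 eps_lt; split; first by apply: upsilon_property6; lra.
case=> P' [P'_prob P'_env].
have : upsilon eps abc <= 3/4.
  apply: (proj2 (P'_env abc)) => _ [mu P'mu ->].
  apply: dominated_abc_le (P'_prob _ P'mu) _ => X.
  by apply: (proj1 (P'_env X)); exists mu.
rewrite upsilonE /eighths_eps /pstar_eighths /abc_indicator eqxx !inE /=.
lra.
Qed.
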